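(* Consider the system of ordinary differential equations \[ \begin{aligned} \frac{dr_a}{dt} &= m_a\left(\frac{(p_a/\theta_{aa})^{n_{aa}}}{1+(p_a/\theta_{aa})^{n_{aa}}}+\frac{1}{1+(p_b/\theta_b)^{n_b}}\right)-\gamma_a r_a+A_1,\\ \frac{dr_b}{dt} &= \frac{m_b}{1+(p_a/\theta_a)^{n_a}}-\gamma_b r_b+B_1,\\ \frac{dp_a}{dt} &= k_a r_a-\delta_a p_a,\qquad \frac{dp_b}{dt} = k_b r_b-\delta_b p_b, \end{aligned} \] where $m_a,m_b,\gamma_a,\gamma_b,k_a,k_b,\delta_a,\delta_b,\theta_a,\theta_b,\theta_{aa}>0$, $A_1,B_1\ge 0$, and $n_a,n_b,n_{aa}$ are positive integers. Let $S^*=(r_a^*,r_b^*,p_a^*,p_b^* )$ be a steady state of this system with $p_a^*>0$, $p_b^*>0$. Set, with $p_a=p_a^*$, $p_b=p_b^*$, \[ X=\frac{m_a n_{aa}\theta_{aa}^{n_{aa}}p_a^{n_{aa}-1}}{(\theta_{aa}^{n_{aa}}+p_a^{n_{aa}})^2},\quad Y=-\frac{m_a n_b\theta_b^{n_b}p_b^{n_b-1}}{(\theta_b^{n_b}+p_b^{n_b})^2},\quad Z=-\frac{m_b n_a p_a^{n_a-1}\theta_a^{n_a}}{(p_a^{n_a}+\theta_a^{n_a})^2}, \] and \[ \begin{aligned} \epsilon_1&=\gamma_a+\gamma_b+\delta_a+\delta_b,\\ \epsilon_2&=\gamma_a\gamma_b+(\gamma_a+\gamma_b)(\delta_a+\delta_b)+\delta_a\delta_b-k_aX,\\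 \epsilon_3&=\delta_a\delta_b(\gamma_a+\gamma_b)+(\delta_a+\delta_b)\gamma_a\gamma_b-k_a(\delta_b+\gamma_b)X,\\ \epsilon_4&=\gamma_a\gamma_b\delta_a\delta_b-k_ak_bYZ-k_a\gamma_b\delta_bX. \end{aligned} \] If $\epsilon_1>0$, $\epsilon_3>0$, $\epsilon_4>0$ and $\epsilon_1\epsilon_2\epsilon_3-\epsilon_1^2\epsilon_4-\epsilon_3^2>0$, then $S^*$ is locally asymptotically stable.
   Context: This models a two-gene network in which gene $a$ is co-regulated by activation from its own protein $p_a$ and repression by protein $p_b$ (combined via a non-competitive OR logic, i.e. the sum of the two regulatory terms), and gene $b$ is repressed by $p_a$; $r_a,r_b$ are mRNA concentrations and $p_a,p_b$ protein concentrations. A steady state is a point where all four right-hand sides vanish. *)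

From Stdlib Require Import Reals.
Open Scope R_scope.

Record params := mkParams {
  m_a : R; m_b : R; gamma_a : R; gamma_b : R;
  k_a : R; k_b : R; delta_a : R; delta_b : R;
  theta_a : R; theta_b : R; theta_aa : R;
  A_1 : R; B_1 : R;
  n_a : nat; n_b : nat; n_aa : nat }.

Record state := mkState { ra : R; rb : R; pa : R; pb : R }.

Definition f_ra (P : params) (s : state) : R :=
  m_a P * ((pa s / theta_aa P) ^ n_aa P / (1 + (pa s / theta_aa P) ^ n_aa P)
           + 1 / (1 + (pb s / theta_b P) ^ n_b P))
  - gamma_a P * ra s + A_1 P.
Definition f_rb (P : params) (s : state) : R :=
  m_b P / (1 + (pa s / theta_a P) ^ n_a P) - gamma_b P * rb s + B_1 P.
Definition f_pa (P : params) (s : state) : R := k_a P * ra s - delta_a P * pa s.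
Definition f_pb (P : params) (s : state) : R := k_b P * rb s - delta_b P * pb s.

Definition steady_state (P : params) (s : state) : Prop :=
  f_ra P s = 0 /\ f_rb P s = 0 /\ f_pa P s = 0 /\ f_pb P s = 0.

(* A (forward-global) solution: x is differentiable on an open interval
   (a, +oo) with a < 0 (so on a neighbourhood of [0,+oo)) and satisfies the ODE. *)
Definition is_solution (P : params) (x : R -> state) : Prop :=
  exists a, a < 0 /\ forall t, a < t ->
    derivable_pt_lim (fun u => ra (x u)) t (f_ra P (x t)) /\
    derivable_pt_lim (fun u => rb (x u)) t (f_rb P (x t)) /\
    derivable_pt_lim (fun u => pa (x u)) t (f_pa P (x t)) /\
    derivable_pt_lim (fun u => pb (x u)) t (f_pb P (x t)).

Definition dist4 (s s' : state) : R :=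
  Rmax (Rmax (Rabs (ra s - ra s')) (Rabs (rb s - rb s')))
       (Rmax (Rabs (pa s - pa s')) (Rabs (pb s - pb s'))).

Definition locally_asymptotically_stable (P : params) (s : state) : Prop :=
  (forall eps, 0 < eps -> exists del, 0 < del /\
     forall x, is_solution P x -> dist4 (x 0) s < del ->
       forall t, 0 <= t -> dist4 (x t) s < eps) /\
  (exists del, 0 < del /\
     forall x, is_solution P x -> dist4 (x 0) s < del ->
       forall e, 0 < e -> exists T, forall t, T <= t -> dist4 (x t) s < e).

Definition Xq (P : params) (p_a : R) : R :=
  m_a P * INR (n_aa P) * theta_aa P ^ n_aa P * p_a ^ (n_aa P - 1)
  / (theta_aa P ^ n_aa P + p_a ^ n_aa P) ^ 2.
Definition Yq (P : params) (p_b : R) : R :=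
  - (m_a P * INR (n_b P) * theta_b P ^ n_b P * p_b ^ (n_b P - 1)
     / (theta_b P ^ n_b P + p_b ^ n_b P) ^ 2).
Definition Zq (P : params) (p_a : R) : R :=
  - (m_b P * INR (n_a P) * p_a ^ (n_a P - 1) * theta_a P ^ n_a P
     / (p_a ^ n_a P + theta_a P ^ n_a P) ^ 2).

Definition epsilon1 (P : params) : R :=
  gamma_a P + gamma_b P + delta_a P + delta_b P.
Definition epsilon2 (P : params) (s : state) : R :=
  gamma_a P * gamma_b P + (gamma_a P + gamma_b P) * (delta_a P + delta_b P)
  + delta_a P * delta_b P - k_a P * Xq P (pa s).
Definition epsilon3 (P : params) (s : state) : R :=
  delta_a P * delta_b P * (gamma_a P + gamma_b P)
  + (delta_a P + delta_b P) * gamma_a P * gamma_b P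
  - k_a P * (delta_b P + gamma_b P) * Xq P (pa s).
Definition epsilon4 (P : params) (s : state) : R :=
  gamma_a P * gamma_b P * delta_a P * delta_b P
  - k_a P * k_b P * Yq P (pb s) * Zq P (pa s)
  - k_a P * gamma_b P * delta_b P * Xq P (pa s).

(* The Routh-Hurwitz inequalities are open conditions, so they still hold for the
   characteristic polynomial of [J + mu] for some small [mu > 0], [J] being the Jacobian at
   [S].  Along the linearised flow the Krylov coordinates [dot ((J^T + mu)^k e_pb) u],
   [k = 0..3], evolve by the companion matrix of [J + mu] shifted by [- mu], so Schwarz's
   Lyapunov function for companion systems gives a positive definite quadratic form [V] with
   [V' <= - 2 mu V].  The nonlinear remainder is [o(|x - S|)], hence [V' <= - mu V] near [S]
   along true solutions, and [V (x t) (1 + mu t)] cannot increase while [x t] stays near [S]: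
   this yields both Lyapunov stability and attractivity. *)

From Stdlib Require Import Reals Lra Psatz Lia List.
From Coquelicot Require Import Coquelicot.
Import ListNotations.
Open Scope R_scope.

Definition dot (l u : state) : R :=
  ra l * ra u + rb l * rb u + pa l * pa u + pb l * pb u.
Definition state_add (x y : state) : state :=
  mkState (ra x + ra y) (rb x + rb y) (pa x + pa y) (pb x + pb y).
Definition state_sub (x y : state) : state :=
  mkState (ra x - ra y) (rb x - rb y) (pa x - pa y) (pb x - pb y).
Definition state_scale (c : R) (x : state) : state :=
  mkState (c * ra x) (c * rb x) (c * pa x) (c * pb x).
Definition norm_inf (u : state) : R :=
  Rmax (Rmax (Rabs (ra u)) (Rabs (rb u))) (Rmax (Rabs (pa u)) (Rabs (pb u))).
Definition norm_l1 (l : state) : R :=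
  Rabs (ra l) + Rabs (rb l) + Rabs (pa l) + Rabs (pb l).

Lemma dist4_norm_inf x s : dist4 x s = norm_inf (state_sub x s).
Proof. reflexivity. Qed.

Lemma coords_le_norm_inf u :
  Rabs (ra u) <= norm_inf u /\ Rabs (rb u) <= norm_inf u /\
  Rabs (pa u) <= norm_inf u /\ Rabs (pb u) <= norm_inf u.
Proof.
  unfold norm_inf.
  pose proof (Rmax_l (Rabs (ra u)) (Rabs (rb u))); pose proof (Rmax_r (Rabs (ra u)) (Rabs (rb u))).
  pose proof (Rmax_l (Rabs (pa u)) (Rabs (pb u))); pose proof (Rmax_r (Rabs (pa u)) (Rabs (pb u))).
  pose proof (Rmax_l (Rmax (Rabs (ra u)) (Rabs (rb u))) (Rmax (Rabs (pa u)) (Rabs (pb u)))).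
  pose proof (Rmax_r (Rmax (Rabs (ra u)) (Rabs (rb u))) (Rmax (Rabs (pa u)) (Rabs (pb u)))).
  lra.
Qed.

Lemma norm_inf_ge0 u : 0 <= norm_inf u.
Proof. pose proof (coords_le_norm_inf u); pose proof (Rabs_pos (ra u)); lra. Qed.

Lemma norm_inf_le u M :
  Rabs (ra u) <= M -> Rabs (rb u) <= M -> Rabs (pa u) <= M -> Rabs (pb u) <= M ->
  norm_inf u <= M.
Proof. intros; unfold norm_inf; repeat apply Rmax_lub; assumption. Qed.

Lemma norm_l1_ge0 l : 0 <= norm_l1 l.
Proof.
  unfold norm_l1.
  pose proof (Rabs_pos (ra l)); pose proof (Rabs_pos (rb l));
  pose proof (Rabs_pos (pa l)); pose proof (Rabs_pos (pb l)); lra.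
Qed.

Lemma Rabs_mult_le a x X : Rabs x <= X -> Rabs (a * x) <= Rabs a * X.
Proof. intros; rewrite Rabs_mult; apply Rmult_le_compat_l; [apply Rabs_pos | assumption]. Qed.

Lemma Rabs_add_le x y X Y : Rabs x <= X -> Rabs y <= Y -> Rabs (x + y) <= X + Y.
Proof. pose proof (Rabs_triang x y); lra. Qed.

Lemma Rabs_dot_le l u : Rabs (dot l u) <= norm_l1 l * norm_inf u.
Proof.
  destruct (coords_le_norm_inf u) as (Ha & Hb & Hc & Hd).
  pose proof (Rabs_mult_le (ra l) _ _ Ha); pose proof (Rabs_mult_le (rb l) _ _ Hb).
  pose proof (Rabs_mult_le (pa l) _ _ Hc); pose proof (Rabs_mult_le (pb l) _ _ Hd).
  unfold dot, norm_l1.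
  pose proof (Rabs_triang (ra l * ra u + rb l * rb u + pa l * pa u) (pb l * pb u)).
  pose proof (Rabs_triang (ra l * ra u + rb l * rb u) (pa l * pa u)).
  pose proof (Rabs_triang (ra l * ra u) (rb l * rb u)).
  lra.
Qed.

Lemma dot_add_r l u v : dot l (state_add u v) = dot l u + dot l v.
Proof. unfold dot, state_add; simpl; ring. Qed.

Definition state_derivable_lim (x : R -> state) (t : R) (v : state) : Prop :=
  derivable_pt_lim (fun s => ra (x s)) t (ra v) /\
  derivable_pt_lim (fun s => rb (x s)) t (rb v) /\
  derivable_pt_lim (fun s => pa (x s)) t (pa v) /\
  derivable_pt_lim (fun s => pb (x s)) t (pb v).

Lemma derivable_pt_lim_affine f a c t l :
  derivable_pt_lim f t l -> derivable_pt_lim (fun s => a * (f s - c)) t (a * l).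
Proof.
  intros Hf.
  replace (a * l) with (0 * (f t - c) + a * (l - 0)) by ring.
  apply (derivable_pt_lim_mult (fun _ => a) (fun s => f s - c)).
  - apply derivable_pt_lim_const.
  - apply (derivable_pt_lim_minus f (fun _ => c)); [assumption | apply derivable_pt_lim_const].
Qed.

Lemma dot_derivable_lim l S x t v : state_derivable_lim x t v ->
  derivable_pt_lim (fun s => dot l (state_sub (x s) S)) t (dot l v).
Proof.
  intros (Ha & Hb & Hc & Hd); unfold dot, state_sub; simpl.
  repeat apply derivable_pt_lim_plus; apply derivable_pt_lim_affine; assumption.
Qed.
Lemma continuity_pt_ball f x : continuity_pt f x -> forall eps, 0 < eps ->
  exists d, 0 < d /\ forall y, Rabs (y - x) < d -> Rabs (f y - f x) < eps.
Proof.
  intros Hf eps Heps; destruct (Hf eps Heps) as (d & Hd & Hball).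
  exists d; split; [assumption |]; intros y Hy.
  destruct (Req_dec y x) as [-> | Hne].
  - rewrite Rminus_diag, Rabs_R0; assumption.
  - apply (Hball y); split; [split; [exact I | congruence] | assumption].
Qed.

Lemma nonincreasing_below_barrier (G G' : R -> R) a rho :
  a < 0 -> (forall t, a < t -> derivable_pt_lim G t (G' t)) -> G 0 < rho ->
  (forall t, 0 <= t -> G t < rho -> G' t <= 0) ->
  forall t, 0 <= t -> G t <= G 0.
Proof.
  intros Ha HG H0 Hdecr t1 Ht1.
  destruct (Rle_dec (G t1) (G 0)) as [| Hgt%Rnot_le_lt]; [assumption | exfalso].
  set (E := fun s => 0 <= s <= t1 /\ G s <= G 0).
  destruct (completeness E) as (s0 & Hub & Hlub).
  { exists t1; intros s Hs; apply Hs. }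
  { exists 0; unfold E; lra. }
  assert (Hs0 : 0 <= s0 <= t1).
  { split; [apply Hub; unfold E; lra | apply Hlub; intros s Hs; apply Hs]. }
  assert (Hcont : continuity_pt G s0).
  { apply derivable_continuous_pt; exists (G' s0); apply HG; lra. }
  (* [E] is closed, so it contains its supremum. *)
  assert (HGs0 : G s0 <= G 0).
  { apply Rnot_lt_le; intros Hlt.
    destruct (continuity_pt_ball G s0 Hcont (G s0 - G 0)) as (d & Hd & Hball); [lra |].
    assert (Hlub' : s0 <= s0 - d).
    { apply Hlub; intros s Hs; apply Rnot_lt_le; intros Hs'.
      assert (s <= s0) by (apply Hub; assumption).
      specialize (Hball s ltac:(rewrite Rabs_left1; lra)).
      destruct Hs as [_ HGs]; apply Rabs_def2 in Hball; lra. }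
    lra. }
  assert (Hlt : s0 < t1) by (destruct (Req_dec s0 t1); [subst; lra | lra]).
  (* Just right of [s0], [G] stays below [rho], hence cannot increase: this contradicts
     [s0 = sup E]. *)
  destruct (continuity_pt_ball G s0 Hcont (rho - G s0)) as (d & Hd & Hball); [lra |].
  set (t2 := Rmin (s0 + d / 2) t1).
  assert (Ht2 : s0 < t2 <= s0 + d / 2 /\ t2 <= t1).
  { unfold t2; split; [split; [apply Rmin_glb_lt |apply Rmin_l] | apply Rmin_r]; lra. }
  destruct (MVT_cor2 G G' s0 t2) as (c & Hmvt & Hc); [lra | intros c Hc; apply HG; lra |].
  assert (HGc : G c < rho).
  { specialize (Hball c ltac:(rewrite Rabs_right; lra)); apply Rabs_def2 in Hball; lra. }
  specialize (Hdecr c ltac:(lra) HGc).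
  assert (t2 <= s0) by (apply Hub; split; [lra | nra]).
  lra.
Qed.

Lemma le_mul_one_plus v a : 0 <= v -> 0 <= a -> v <= v * (1 + a).
Proof. intros Hv Ha; pose proof (Rmult_le_pos _ _ Hv Ha); nra. Qed.

Lemma dist4_ge0 x s : 0 <= dist4 x s.
Proof. rewrite dist4_norm_inf; apply norm_inf_ge0. Qed.

Definition vector_field (P : params) (s : state) : state :=
  mkState (f_ra P s) (f_rb P s) (f_pa P s) (f_pb P s).

Lemma small_square_bound M c : 0 < c ->
  exists del, 0 < del /\ forall d, 0 <= d < del -> M * d ^ 2 < c.
Proof.
  intros Hc; exists (Rmin 1 (c / (Rabs M + 1))); split.
  { apply Rmin_glb_lt; [lra | apply Rdiv_lt_0_compat; pose proof (Rabs_pos M); lra]. }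
  intros d Hd.
  pose proof (Rmin_l 1 (c / (Rabs M + 1))); pose proof (Rmin_r 1 (c / (Rabs M + 1))).
  pose proof (Rabs_pos M); pose proof (Rle_abs M).
  assert (Hk : (Rabs M + 1) * (c / (Rabs M + 1)) = c) by (field; apply Rgt_not_eq; lra).
  set (k := c / (Rabs M + 1)) in *.
  assert (M * d ^ 2 <= Rabs M * d ^ 2) by (pose proof (pow2_ge_0 d); nra).
  assert (Rabs M * d ^ 2 <= Rabs M * d) by (apply Rmult_le_compat_l; nra).
  assert (Rabs M * d <= Rabs M * k) by (apply Rmult_le_compat_l; lra).
  nra.
Qed.

Lemma lt_of_square_lt m d e : 0 < m -> 0 <= d -> 0 < e -> m * d ^ 2 < m * e ^ 2 -> d < e.
Proof.
  intros Hm Hd He H; apply Rnot_le_lt; intros Hed.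
  pose proof (pow_incr e d 2 ltac:(lra)); nra.
Qed.

Section Lyapunov.

Variables (P : params) (S : state) (V V' : state -> R) (m M mu r : R).
Hypotheses (Hm : 0 < m) (Hmu : 0 < mu) (Hr : 0 < r).
Hypothesis V_lower : forall x, m * dist4 x S ^ 2 <= V x.
Hypothesis V_upper : forall x, V x <= M * dist4 x S ^ 2.
Hypothesis V_derivable : forall x t, state_derivable_lim x t (vector_field P (x t)) ->
  derivable_pt_lim (fun s => V (x s)) t (V' (x t)).
Hypothesis V_decay : forall x, dist4 x S < r -> V' x <= - mu * V x.

Lemma lyapunov_nonneg x : 0 <= V x.
Proof. pose proof (V_lower x); pose proof (pow2_ge_0 (dist4 x S)); nra. Qed.

(* The polynomial weight [1 + mu t] replaces the usual exponential one. *)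
Lemma lyapunov_decay x : is_solution P x -> V (x 0) < m * r ^ 2 ->
  forall t, 0 <= t -> V (x t) * (1 + mu * t) <= V (x 0).
Proof.
  intros (a & Ha & Hsol) H0 t Ht.
  enough (V (x t) * (1 + mu * t) <= V (x 0) * (1 + mu * 0)) by lra.
  apply (nonincreasing_below_barrier (fun t => V (x t) * (1 + mu * t))
           (fun t => V' (x t) * (1 + mu * t) + V (x t) * mu) a (m * r ^ 2)); try lra.
  - intros s Hs; apply (derivable_pt_lim_mult (fun s => V (x s)) (fun s => 1 + mu * s)).
    + apply V_derivable, Hsol; assumption.
    + apply is_derive_Reals; auto_derive; [exact I | ring].
  - intros s Hs HG.
    pose proof (lyapunov_nonneg (x s)); pose proof (V_lower (x s)); pose proof (dist4_ge0 (x s) S).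
    pose proof (le_mul_one_plus (V (x s)) (mu * s) (lyapunov_nonneg (x s)) ltac:(nra)).
    assert (Hclose : dist4 (x s) S < r) by (apply (lt_of_square_lt m); lra).
    pose proof (Rmult_le_compat_r (1 + mu * s) _ _ ltac:(nra) (V_decay _ Hclose)).
    pose proof (Rmult_le_pos _ _ (Rmult_le_pos _ _ (Rlt_le _ _ Hmu) (Rlt_le _ _ Hmu))
                  (Rmult_le_pos _ _ Hs (lyapunov_nonneg (x s)))).
    nra.
Qed.

Lemma lyapunov_small_near c : 0 < c -> exists del, 0 < del /\ forall s, dist4 s S < del -> V s < c.
Proof.
  intros Hc; destruct (small_square_bound M c Hc) as (del & Hdel & Hsq).
  exists del; split; [assumption |]; intros s Hs.
  pose proof (V_upper s); pose proof (Hsq (dist4 s S) (conj (dist4_ge0 s S) Hs)); lra.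
Qed.

Lemma lyapunov_nonincreasing x : is_solution P x -> V (x 0) < m * r ^ 2 ->
  forall t, 0 <= t -> V (x t) <= V (x 0).
Proof.
  intros Hx H0 t Ht; pose proof (lyapunov_decay x Hx H0 t Ht).
  pose proof (le_mul_one_plus (V (x t)) (mu * t) (lyapunov_nonneg (x t)) ltac:(nra)); lra.
Qed.

Theorem lyapunov_asymptotically_stable : locally_asymptotically_stable P S.
Proof.
  split.
  - intros eps Heps; set (rho := Rmin r eps).
    assert (Hrho : 0 < rho /\ rho <= r /\ rho <= eps)
      by (unfold rho; split; [apply Rmin_glb_lt | split; [apply Rmin_l | apply Rmin_r]]; lra).
    pose proof (pow_incr rho r 2 ltac:(lra)); pose proof (pow_incr rho eps 2 ltac:(lra)).
    destruct (lyapunov_small_near (m * rho ^ 2)) as (del & Hdel & Hnear).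
    { apply Rmult_lt_0_compat; [| apply pow_lt]; lra. }
    exists del; split; [assumption |]; intros x Hx Hx0 t Ht.
    specialize (Hnear _ Hx0).
    pose proof (lyapunov_nonincreasing x Hx ltac:(nra) t Ht); pose proof (V_lower (x t)).
    apply (lt_of_square_lt m); [| apply dist4_ge0 | |]; nra.
  - destruct (lyapunov_small_near (m * r ^ 2)) as (del & Hdel & Hnear).
    { apply Rmult_lt_0_compat; [| apply pow_lt]; lra. }
    exists del; split; [assumption |]; intros x Hx Hx0 e He.
    specialize (Hnear _ Hx0).
    assert (Hme : 0 < mu * m * e ^ 2) by (pose proof (pow_lt e 2 He); apply Rmult_lt_0_compat; nra).
    exists (V (x 0) / (mu * m * e ^ 2)); intros t Ht.
    assert (HT : V (x 0) <= mu * m * e ^ 2 * t).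
    { apply (Rmult_le_compat_l (mu * m * e ^ 2)) in Ht; [| lra].
      replace (mu * m * e ^ 2 * (V (x 0) / (mu * m * e ^ 2))) with (V (x 0)) in Ht
        by (field; repeat split; apply Rgt_not_eq; assumption).
      assumption. }
    assert (Ht0 : 0 <= t).
    { pose proof (lyapunov_nonneg (x 0)); apply (Rmult_le_reg_l (mu * m * e ^ 2)); lra. }
    pose proof (lyapunov_decay x Hx Hnear t Ht0).
    pose proof (Rmult_le_compat_r (1 + mu * t) _ _ ltac:(nra) (V_lower (x t))).
    apply (lt_of_square_lt m); [lra | apply dist4_ge0 | lra |].
    apply (Rmult_lt_reg_r (1 + mu * t)); nra.
Qed.
End Lyapunov.

Definition sos (ws : list (R * state)) (u : state) : R :=
  fold_right (fun wl acc => fst wl * dot (snd wl) u ^ 2 + acc) 0 ws.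
Definition sos_polar (ws : list (R * state)) (u v : state) : R :=
  fold_right (fun wl acc => fst wl * dot (snd wl) u * dot (snd wl) v + acc) 0 ws.
Definition sos_bound (ws : list (R * state)) : R :=
  fold_right (fun wl acc => Rabs (fst wl) * norm_l1 (snd wl) ^ 2 + acc) 0 ws.

Lemma sos_polar_diag ws u : sos_polar ws u u = sos ws u.
Proof. induction ws as [| [w l] ws IH]; simpl; [| rewrite IH]; ring. Qed.

Lemma sos_polar_add_r ws u v v' :
  sos_polar ws u (state_add v v') = sos_polar ws u v + sos_polar ws u v'.
Proof. induction ws as [| [w l] ws IH]; simpl; [| rewrite IH, dot_add_r]; ring. Qed.

Lemma sos_bound_ge0 ws : 0 <= sos_bound ws.
Proof.
  induction ws as [| [w l] ws IH]; simpl; [lra |].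
  pose proof (Rabs_pos w); pose proof (pow2_ge_0 (norm_l1 l)); nra.
Qed.

Lemma Rabs_sos_polar_le ws u v :
  Rabs (sos_polar ws u v) <= sos_bound ws * norm_inf u * norm_inf v.
Proof.
  induction ws as [| [w l] ws IH]; simpl; [rewrite Rabs_R0; lra |].
  pose proof (Rabs_dot_le l u) as Hu; pose proof (Rabs_dot_le l v) as Hv.
  pose proof (Rabs_pos (dot l u)); pose proof (Rabs_pos (dot l v)); pose proof (Rabs_pos w).
  pose proof (norm_l1_ge0 l); pose proof (norm_inf_ge0 u); pose proof (norm_inf_ge0 v).
  pose proof (Rabs_triang (w * dot l u * dot l v) (sos_polar ws u v)).
  rewrite !Rabs_mult in *.
  assert (Rabs (dot l u) * Rabs (dot l v) <= norm_l1 l * norm_inf u * (norm_l1 l * norm_inf v))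
    by (apply Rmult_le_compat; assumption).
  assert (Rabs w * (Rabs (dot l u) * Rabs (dot l v))
          <= Rabs w * (norm_l1 l * norm_inf u * (norm_l1 l * norm_inf v)))
    by (apply Rmult_le_compat_l; assumption).
  nra.
Qed.

Lemma sos_le_bound ws u : sos ws u <= sos_bound ws * norm_inf u ^ 2.
Proof.
  rewrite <- sos_polar_diag; pose proof (Rabs_sos_polar_le ws u u).
  pose proof (Rle_abs (sos_polar ws u u)); nra.
Qed.

Lemma sos_ge0 ws u : List.Forall (fun wl => 0 <= fst wl) ws -> 0 <= sos ws u.
Proof.
  induction ws as [| [w l] ws IH]; simpl; intros Hpos; [lra |].
  apply Forall_cons_iff in Hpos as [Hw Hws]; simpl in Hw.
  pose proof (IH Hws); pose proof (pow2_ge_0 (dot l u)); nra.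
Qed.

Lemma sos_term_le ws w l u : List.Forall (fun wl => 0 <= fst wl) ws -> List.In (w, l) ws ->
  w * dot l u ^ 2 <= sos ws u.
Proof.
  induction ws as [| [w' l'] ws IH]; simpl; intros Hpos Hin; [contradiction |].
  apply Forall_cons_iff in Hpos as [Hw' Hws]; simpl in Hw'.
  pose proof (sos_ge0 ws u Hws); pose proof (pow2_ge_0 (dot l' u)).
  destruct Hin as [[= -> ->] | Hin]; [lra |].
  specialize (IH Hws Hin); nra.
Qed.

Lemma sos_derivable_lim ws S x t v : state_derivable_lim x t v ->
  derivable_pt_lim (fun s => sos ws (state_sub (x s) S)) t
    (2 * sos_polar ws (state_sub (x t) S) v).
Proof.
  intros Hx; induction ws as [| [w l] ws IH]; simpl.
  - rewrite Rmult_0_r; apply derivable_pt_lim_const.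
  - pose proof (dot_derivable_lim l S x t v Hx) as Hl.
    replace (2 * (w * dot l (state_sub (x t) S) * dot l v + sos_polar ws (state_sub (x t) S) v))
      with (w * (2 * dot l (state_sub (x t) S) * dot l v)
            + 2 * sos_polar ws (state_sub (x t) S) v) by ring.
    apply (derivable_pt_lim_plus (fun s => w * dot l (state_sub (x s) S) ^ 2)); [| exact IH].
    apply (derivable_pt_lim_scal (fun s => dot l (state_sub (x s) S) ^ 2)).
    replace (2 * dot l (state_sub (x t) S) * dot l v)
      with (INR 2 * dot l (state_sub (x t) S) ^ (2 - 1) * dot l v) by (simpl; ring).
    apply (derivable_pt_lim_comp (fun s => dot l (state_sub (x s) S)) (fun y => y ^ 2));
      [exact Hl | apply derivable_pt_lim_pow].
Qed.

Lemma echelon_step c v e M K : c <> 0 -> Rabs (c * v + e) <= M -> Rabs e <= K * M ->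
  Rabs v <= (1 + K) / Rabs c * M.
Proof.
  intros Hc Hv He; pose proof (Rabs_pos_lt c Hc).
  assert (Hcv : Rabs c * Rabs v <= M + K * M).
  { rewrite <- Rabs_mult; replace (c * v) with (c * v + e + - e) by ring.
    apply Rabs_add_le; [| rewrite Rabs_Ropp]; assumption. }
  apply (Rmult_le_reg_l (Rabs c)); [assumption |].
  replace (Rabs c * ((1 + K) / Rabs c * M)) with (M + K * M) by (field; lra); assumption.
Qed.

(* Covectors in echelon form: [u] is recovered from [dot l1 u], ..., [dot l4 u] by solving
   successively for [pb u], [rb u], [pa u] and [ra u]. *)
Lemma echelon_norm_bound l1 l2 l3 l4 :
  ra l1 = 0 -> rb l1 = 0 -> pa l1 = 0 -> pb l1 <> 0 ->
  ra l2 = 0 -> pa l2 = 0 -> rb l2 <> 0 ->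
  ra l3 = 0 -> pa l3 <> 0 -> ra l4 <> 0 ->
  exists K, 0 < K /\ forall u M,
    Rabs (dot l1 u) <= M -> Rabs (dot l2 u) <= M -> Rabs (dot l3 u) <= M -> Rabs (dot l4 u) <= M ->
    norm_inf u <= K * M.
Proof.
  intros A1 B1 C1 D1 A2 C2 B2 A3 C3 A4.
  set (K1 := (1 + 0) / Rabs (pb l1)).
  set (K2 := (1 + Rabs (pb l2) * K1) / Rabs (rb l2)).
  set (K3 := (1 + (Rabs (rb l3) * K2 + Rabs (pb l3) * K1)) / Rabs (pa l3)).
  set (K4 := (1 + (Rabs (rb l4) * K2 + Rabs (pa l4) * K3 + Rabs (pb l4) * K1)) / Rabs (ra l4)).
  assert (HK : 0 <= K1 /\ 0 <= K2 /\ 0 <= K3 /\ 0 <= K4).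
  { pose proof (Rabs_pos (pb l2)); pose proof (Rabs_pos (rb l3)); pose proof (Rabs_pos (pb l3));
    pose proof (Rabs_pos (rb l4)); pose proof (Rabs_pos (pa l4)); pose proof (Rabs_pos (pb l4)).
    assert (0 <= K1) by (apply Rlt_le, Rdiv_lt_0_compat; [| apply Rabs_pos_lt]; lra).
    assert (0 <= K2) by (apply Rlt_le, Rdiv_lt_0_compat; [| apply Rabs_pos_lt]; nra).
    assert (0 <= K3) by (apply Rlt_le, Rdiv_lt_0_compat; [| apply Rabs_pos_lt]; nra).
    assert (0 <= K4) by (apply Rlt_le, Rdiv_lt_0_compat; [| apply Rabs_pos_lt]; nra).
    tauto. }
  exists (1 + K1 + K2 + K3 + K4); split; [lra |].
  intros u M E1 E2 E3 E4; unfold dot in E1, E2, E3, E4.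
  assert (HM : 0 <= M) by (eapply Rle_trans; [apply Rabs_pos | exact E1]).
  rewrite A1, B1, C1, !Rmult_0_l, !Rplus_0_l in E1.
  rewrite A2, C2, !Rmult_0_l, Rplus_0_l, Rplus_0_r in E2.
  rewrite A3, Rmult_0_l, Rplus_0_l in E3.
  assert (U1 : Rabs (pb u) <= K1 * M).
  { apply (echelon_step _ _ 0); [assumption | rewrite Rplus_0_r; assumption |].
    rewrite Rabs_R0; lra. }
  assert (U2 : Rabs (rb u) <= K2 * M).
  { apply (echelon_step _ _ (pb l2 * pb u)); [assumption | assumption |].
    rewrite Rmult_assoc; apply Rabs_mult_le; assumption. }
  assert (U3 : Rabs (pa u) <= K3 * M).
  { apply (echelon_step _ _ (rb l3 * rb u + pb l3 * pb u)); [assumption | |].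
    - replace (pa l3 * pa u + (rb l3 * rb u + pb l3 * pb u))
        with (rb l3 * rb u + pa l3 * pa u + pb l3 * pb u) by ring; assumption.
    - rewrite Rmult_plus_distr_r, !Rmult_assoc.
      apply Rabs_add_le; apply Rabs_mult_le; assumption. }
  assert (U4 : Rabs (ra u) <= K4 * M).
  { apply (echelon_step _ _ (rb l4 * rb u + pa l4 * pa u + pb l4 * pb u)); [assumption | |].
    - rewrite <- !Rplus_assoc; assumption.
    - rewrite !Rmult_plus_distr_r, !Rmult_assoc.
      repeat apply Rabs_add_le; apply Rabs_mult_le; assumption. }
  apply norm_inf_le; nra.
Qed.

Lemma pos_lower_bound4 a b c d : 0 < a -> 0 < b -> 0 < c -> 0 < d ->
  exists e, 0 < e /\ e <= a /\ e <= b /\ e <= c /\ e <= d.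
Proof.
  intros Ha Hb Hc Hd; exists (Rmin (Rmin a b) (Rmin c d)).
  pose proof (Rmin_l a b); pose proof (Rmin_r a b);
  pose proof (Rmin_l c d); pose proof (Rmin_r c d);
  pose proof (Rmin_l (Rmin a b) (Rmin c d)); pose proof (Rmin_r (Rmin a b) (Rmin c d)).
  repeat split; try lra; repeat apply Rmin_glb_lt; assumption.
Qed.

Lemma Rabs_le_sqrt x c : x ^ 2 <= c -> Rabs x <= sqrt c.
Proof. intros H; rewrite <- sqrt_Rsqr_abs, Rsqr_pow2; apply sqrt_le_1_alt, H. Qed.

Lemma sos_echelon_lower w1 w2 w3 w4 l1 l2 l3 l4 :
  0 < w1 -> 0 < w2 -> 0 < w3 -> 0 < w4 ->
  ra l1 = 0 -> rb l1 = 0 -> pa l1 = 0 -> pb l1 <> 0 ->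
  ra l2 = 0 -> pa l2 = 0 -> rb l2 <> 0 ->
  ra l3 = 0 -> pa l3 <> 0 -> ra l4 <> 0 ->
  exists m, 0 < m /\ forall u,
    m * norm_inf u ^ 2 <= sos [(w1, l1); (w2, l2); (w3, l3); (w4, l4)] u.
Proof.
  intros W1 W2 W3 W4 A1 B1 C1 D1 A2 C2 B2 A3 C3 A4.
  destruct (echelon_norm_bound l1 l2 l3 l4) as (K & HK & Hbound); try assumption.
  destruct (pos_lower_bound4 w1 w2 w3 w4 W1 W2 W3 W4) as (w & Hw).
  exists (w / K ^ 2); split; [apply Rdiv_lt_0_compat, pow_lt; lra |].
  intros u; set (ws := [(w1, l1); (w2, l2); (w3, l3); (w4, l4)]).
  assert (Hpos : List.Forall (fun wl => 0 <= fst wl) ws) by (repeat constructor; simpl; lra).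
  assert (Hterm : forall wi li, List.In (wi, li) ws -> w <= wi -> dot li u ^ 2 <= sos ws u / w).
  { intros wi li Hin Hwi; pose proof (sos_term_le ws wi li u Hpos Hin).
    pose proof (pow2_ge_0 (dot li u)).
    apply (Rmult_le_reg_l w); [lra |].
    replace (w * (sos ws u / w)) with (sos ws u) by (field; lra); nra. }
  pose proof (Hbound u (sqrt (sos ws u / w))) as Hu.
  assert (Hn : norm_inf u <= K * sqrt (sos ws u / w)).
  { apply Hu; apply Rabs_le_sqrt;
      [apply (Hterm w1) | apply (Hterm w2) | apply (Hterm w3) | apply (Hterm w4)]; simpl; tauto. }
  assert (Hsq : sqrt (sos ws u / w) ^ 2 = sos ws u / w).
  { rewrite <- Rsqr_pow2; apply Rsqr_sqrt; unfold Rdiv.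
    apply Rmult_le_pos; [apply sos_ge0, Hpos | apply Rlt_le, Rinv_0_lt_compat; lra]. }
  pose proof (pow_incr _ _ 2 (conj (norm_inf_ge0 u) Hn)) as Hn2.
  rewrite Rpow_mult_distr, Hsq in Hn2.
  apply (Rmult_le_compat_l (w / K ^ 2)) in Hn2; [| apply Rlt_le, Rdiv_lt_0_compat, pow_lt; lra].
  replace (w / K ^ 2 * (K ^ 2 * (sos ws u / w))) with (sos ws u) in Hn2
    by (field; split; apply Rgt_not_eq; lra).
  assumption.
Qed.

Definition hurwitz_det (c1 c2 c3 c4 : R) : R := c1 * c2 * c3 - c1 ^ 2 * c4 - c3 ^ 2.

Definition hurwitz4 (c1 c2 c3 c4 : R) : Prop :=
  0 < c1 /\ 0 < c3 /\ 0 < c4 /\ 0 < hurwitz_det c1 c2 c3 c4.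

(* Coefficients of [p (X - mu)] for [p = X^4 + a1 X^3 + a2 X^2 + a3 X + a4]. *)
Definition shift_coef1 a1 mu := a1 - 4 * mu.
Definition shift_coef2 a1 a2 mu := a2 - 3 * a1 * mu + 6 * mu ^ 2.
Definition shift_coef3 a1 a2 a3 mu := a3 - 2 * a2 * mu + 3 * a1 * mu ^ 2 - 4 * mu ^ 3.
Definition shift_coef4 a1 a2 a3 a4 mu := a4 - a3 * mu + a2 * mu ^ 2 - a1 * mu ^ 3 + mu ^ 4.

Lemma pos_near f x : continuity_pt f x -> 0 < f x ->
  exists d, 0 < d /\ forall y, Rabs (y - x) < d -> 0 < f y.
Proof.
  intros Hf Hpos; destruct (continuity_pt_ball f x Hf (f x) Hpos) as (d & Hd & Hball).
  exists d; split; [assumption |]; intros y Hy; specialize (Hball y Hy).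
  apply Rabs_def2 in Hball; lra.
Qed.

Lemma hurwitz4_shift a1 a2 a3 a4 : hurwitz4 a1 a2 a3 a4 ->
  exists mu, 0 < mu /\ hurwitz4 (shift_coef1 a1 mu) (shift_coef2 a1 a2 mu)
                           (shift_coef3 a1 a2 a3 mu) (shift_coef4 a1 a2 a3 a4 mu).
Proof.
  intros (H1 & H3 & H4 & HD).
  destruct (pos_near (fun mu => shift_coef1 a1 mu) 0) as (d1 & Hd1 & P1);
    [unfold shift_coef1; reg | unfold shift_coef1; lra |].
  destruct (pos_near (fun mu => shift_coef3 a1 a2 a3 mu) 0) as (d3 & Hd3 & P3);
    [unfold shift_coef3; reg | unfold shift_coef3; lra |].
  destruct (pos_near (fun mu => shift_coef4 a1 a2 a3 a4 mu) 0) as (d4 & Hd4 & P4);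
    [unfold shift_coef4; reg | unfold shift_coef4; lra |].
  destruct (pos_near (fun mu => hurwitz_det (shift_coef1 a1 mu) (shift_coef2 a1 a2 mu)
                                  (shift_coef3 a1 a2 a3 mu) (shift_coef4 a1 a2 a3 a4 mu)) 0)
    as (dD & HdD & PD);
    [unfold hurwitz_det, shift_coef1, shift_coef2, shift_coef3, shift_coef4; reg
    | unfold hurwitz_det, shift_coef1, shift_coef2, shift_coef3, shift_coef4 in *; lra |].
  destruct (pos_lower_bound4 d1 d3 d4 dD Hd1 Hd3 Hd4 HdD) as (d & Hd).
  assert (Hsmall : Rabs (d / 2 - 0) < d) by (rewrite Rminus_0_r, Rabs_right; lra).
  exists (d / 2); split; [lra |].
  repeat split; [apply P1 | apply P3 | apply P4 | apply PD]; lra.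
Qed.

Definition schwarz_b2 c1 c2 c3 := (c1 * c2 - c3) / c1.
Definition schwarz_b3 c1 c2 c3 c4 := (c3 * (c1 * c2 - c3) - c1 ^ 2 * c4) / (c1 * (c1 * c2 - c3)).
Definition schwarz_b4 c1 c2 c3 c4 := c1 * c4 / (c1 * c2 - c3).

Lemma hurwitz4_det2_pos c1 c2 c3 c4 : hurwitz4 c1 c2 c3 c4 -> 0 < c1 * c2 - c3.
Proof.
  intros (H1 & H3 & H4 & HD). unfold hurwitz_det in HD.
  assert (0 < c1 ^ 2 * c4) by (apply Rmult_lt_0_compat; [apply pow_lt |]; assumption).
  apply (Rmult_lt_reg_l c3); nra.
Qed.

Lemma schwarz_weights_pos c1 c2 c3 c4 : hurwitz4 c1 c2 c3 c4 ->
  0 < schwarz_b2 c1 c2 c3 /\ 0 < schwarz_b3 c1 c2 c3 c4 /\ 0 < schwarz_b4 c1 c2 c3 c4.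
Proof.
  intros Hh; pose proof (hurwitz4_det2_pos c1 c2 c3 c4 Hh).
  destruct Hh as (H1 & H3 & H4 & HD); unfold hurwitz_det in HD.
  unfold schwarz_b2, schwarz_b3, schwarz_b4; repeat split; apply Rdiv_lt_0_compat; nra.
Qed.

(* Schwarz's Lyapunov function for the companion system
   [y1' = y2, y2' = y3, y3' = y4, y4' = - (c1 y4 + c2 y3 + c3 y2 + c4 y1)] is
   [b2 b3 b4 y1^2 + b2 b3 y2^2 + b2 (y3 + b4 y1)^2 + (y4 + (b3 + b4) y2)^2];
   half of its derivative along the flow is [- c1 (y4 + (b3 + b4) y2)^2]. *)
Lemma schwarz_identity c1 c2 c3 c4 y1 y2 y3 y4 : c1 <> 0 -> c1 * c2 - c3 <> 0 ->
  let b2 := schwarz_b2 c1 c2 c3 in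
  let b3 := schwarz_b3 c1 c2 c3 c4 in
  let b4 := schwarz_b4 c1 c2 c3 c4 in
  b2 * b3 * b4 * y1 * y2 + b2 * b3 * y2 * y3 + b2 * (y3 + b4 * y1) * (y4 + b4 * y2)
  + (y4 + (b3 + b4) * y2) * (- (c1 * y4 + c2 * y3 + c3 * y2 + c4 * y1) + (b3 + b4) * y3)
  = - c1 * (y4 + (b3 + b4) * y2) ^ 2.
Proof. intros H1 H2; cbv zeta; unfold schwarz_b2, schwarz_b3, schwarz_b4; field; auto. Qed.

Definition jac (P : params) (S u : state) : state :=
  mkState (- gamma_a P * ra u + Xq P (pa S) * pa u + Yq P (pb S) * pb u)
          (- gamma_b P * rb u + Zq P (pa S) * pa u)
          (k_a P * ra u - delta_a P * pa u)
          (k_b P * rb u - delta_b P * pb u).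

Lemma dot_add_l l l' u : dot (state_add l l') u = dot l u + dot l' u.
Proof. unfold dot, state_add; simpl; ring. Qed.

Lemma dot_scale_l c l u : dot (state_scale c l) u = c * dot l u.
Proof. unfold dot, state_scale; simpl; ring. Qed.

Section Linearization.

Variables (P : params) (E : state) (mu : R).

Definition jac_shift_transpose (l : state) : state :=
  mkState (- gamma_a P * ra l + k_a P * pa l + mu * ra l)
          (- gamma_b P * rb l + k_b P * pb l + mu * rb l)
          (Xq P (pa E) * ra l + Zq P (pa E) * rb l - delta_a P * pa l + mu * pa l)
          (Yq P (pb E) * ra l - delta_b P * pb l + mu * pb l).

Lemma dot_jac l u : dot l (jac P E u) = dot (jac_shift_transpose l) u - mu * dot l u.
Proof. unfold dot, jac, jac_shift_transpose; simpl; ring. Qed.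

Definition krylov (n : nat) : state := Nat.iter n jac_shift_transpose (mkState 0 0 0 1).

Definition shifted_eps1 := shift_coef1 (epsilon1 P) mu.
Definition shifted_eps2 := shift_coef2 (epsilon1 P) (epsilon2 P E) mu.
Definition shifted_eps3 := shift_coef3 (epsilon1 P) (epsilon2 P E) (epsilon3 P E) mu.
Definition shifted_eps4 := shift_coef4 (epsilon1 P) (epsilon2 P E) (epsilon3 P E) (epsilon4 P E) mu.

(* Cayley-Hamilton for [J^T + mu]: the epsilons are the coefficients of the characteristic
   polynomial of the Jacobian [J]. *)
Lemma dot_krylov4 u : dot (krylov 4) u =
  - (shifted_eps1 * dot (krylov 3) u + shifted_eps2 * dot (krylov 2) u
     + shifted_eps3 * dot (krylov 1) u + shifted_eps4 * dot (krylov 0) u).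
Proof.
  unfold krylov, shifted_eps1, shifted_eps2, shifted_eps3, shifted_eps4,
    shift_coef1, shift_coef2, shift_coef3, shift_coef4,
    epsilon1, epsilon2, epsilon3, epsilon4, dot, jac_shift_transpose; simpl; ring.
Qed.

Let b2 := schwarz_b2 shifted_eps1 shifted_eps2 shifted_eps3.
Let b3 := schwarz_b3 shifted_eps1 shifted_eps2 shifted_eps3 shifted_eps4.
Let b4 := schwarz_b4 shifted_eps1 shifted_eps2 shifted_eps3 shifted_eps4.

Definition schwarz_forms : list (R * state) :=
  [(b2 * b3 * b4, krylov 0); (b2 * b3, krylov 1);
   (b2, state_add (krylov 2) (state_scale b4 (krylov 0)));
   (1, state_add (krylov 3) (state_scale (b3 + b4) (krylov 1)))].

Hypothesis shifted_hurwitz : hurwitz4 shifted_eps1 shifted_eps2 shifted_eps3 shifted_eps4.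

Lemma sos_polar_schwarz_jac u :
  sos_polar schwarz_forms u (jac P E u) <= - mu * sos schwarz_forms u.
Proof.
  pose proof (hurwitz4_det2_pos _ _ _ _ shifted_hurwitz).
  pose proof shifted_hurwitz as (H1 & _).
  pose proof (schwarz_identity shifted_eps1 shifted_eps2 shifted_eps3 shifted_eps4
    (dot (krylov 0) u) (dot (krylov 1) u) (dot (krylov 2) u) (dot (krylov 3) u)
    ltac:(lra) ltac:(lra)) as Hid; cbv zeta in Hid; fold b2 b3 b4 in Hid.
  pose proof (pow2_ge_0 (dot (krylov 3) u + (b3 + b4) * dot (krylov 1) u)).
  assert (Hk : forall n, dot (krylov n) (jac P E u) = dot (krylov (S n)) u - mu * dot (krylov n) u)
    by (intros n; apply dot_jac).
  unfold schwarz_forms, sos_polar, sos; cbn [fold_right fst snd].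
  rewrite !dot_add_l, !dot_scale_l, !Hk, (dot_krylov4 u).
  nra.
Qed.

Lemma schwarz_forms_lower : k_a P <> 0 -> k_b P <> 0 -> Zq P (pa E) <> 0 ->
  exists m, 0 < m /\ forall u, m * norm_inf u ^ 2 <= sos schwarz_forms u.
Proof.
  intros Hka Hkb HZ.
  destruct (schwarz_weights_pos _ _ _ _ shifted_hurwitz) as (H2 & H3 & H4).
  fold b2 b3 b4 in H2, H3, H4.
  apply sos_echelon_lower; unfold krylov, jac_shift_transpose, state_add, state_scale; simpl;
    try ring; try assumption.
  - apply Rmult_lt_0_compat; [apply Rmult_lt_0_compat |]; assumption.
  - apply Rmult_lt_0_compat; assumption.
  - apply Rlt_0_1.
  - apply R1_neq_R0.
  - intros Hz; ring_simplify in Hz; contradiction.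
  - intros Hz; ring_simplify in Hz; apply Rmult_integral in Hz; tauto.
  - intros Hz; ring_simplify in Hz.
    apply Rmult_integral in Hz as [Hz | Hz]; [apply Rmult_integral in Hz |]; tauto.
Qed.
End Linearization.

Definition hill_act (th : R) (n : nat) (p : R) : R := (p / th) ^ n / (1 + (p / th) ^ n).
Definition hill_rep (th : R) (n : nat) (p : R) : R := 1 / (1 + (p / th) ^ n).
Definition hill_slope (th : R) (n : nat) (p : R) : R :=
  INR n * th ^ n * p ^ (n - 1) / (th ^ n + p ^ n) ^ 2.

Lemma hill_slope_eq th n p : 0 < th -> 0 < p ->
  hill_slope th n p = / th * (INR n * (p / th) ^ pred n) / (1 + (p / th) ^ n) ^ 2.
Proof.
  intros Hth Hp; unfold hill_slope; destruct n as [| k]; [simpl; field; lra |].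
  replace (S k - 1)%nat with k by lia; simpl pred.
  assert (0 < th ^ k) by (apply pow_lt; assumption).
  assert (0 < p ^ k) by (apply pow_lt; assumption).
  unfold Rdiv; rewrite !Rpow_mult_distr, !pow_inv; simpl.
  field; repeat split; apply Rgt_not_eq; nra.
Qed.

Lemma hill_act_derivable th n p : 0 < th -> 0 < p ->
  derivable_pt_lim (hill_act th n) p (hill_slope th n p).
Proof.
  intros Hth Hp; apply is_derive_Reals; unfold hill_act; rewrite hill_slope_eq by assumption.
  assert (Hq : 0 < (p / th) ^ n) by (apply pow_lt, Rdiv_lt_0_compat; assumption).
  auto_derive; [lra |]; unfold Rdiv in *; field; lra.
Qed.

Lemma hill_rep_derivable th n p : 0 < th -> 0 < p ->
  derivable_pt_lim (hill_rep th n) p (- hill_slope th n p).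
Proof.
  intros Hth Hp; apply is_derive_Reals; unfold hill_rep; rewrite hill_slope_eq by assumption.
  assert (Hq : 0 < (p / th) ^ n) by (apply pow_lt, Rdiv_lt_0_compat; assumption).
  auto_derive; [lra |]; unfold Rdiv in *; field; lra.
Qed.

Definition taylor_rem (f : R -> R) (l x y : R) : R := f y - f x - l * (y - x).

Lemma taylor_rem_small f l x : derivable_pt_lim f x l -> forall eta, 0 < eta ->
  exists r, 0 < r /\ forall y, Rabs (y - x) < r -> Rabs (taylor_rem f l x y) <= eta * Rabs (y - x).
Proof.
  intros Hf eta Heta; destruct (Hf eta Heta) as [r Hr].
  exists r; split; [apply cond_pos |]; intros y Hy; unfold taylor_rem.
  destruct (Req_dec y x) as [-> | Hne].
  - rewrite !Rminus_diag, Rmult_0_r, Rminus_0_r, !Rabs_R0; lra.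
  - specialize (Hr (y - x) ltac:(lra) Hy); replace (x + (y - x)) with y in Hr by ring.
    replace (f y - f x - l * (y - x)) with ((y - x) * ((f y - f x) / (y - x) - l)) by (field; lra).
    rewrite Rabs_mult, Rmult_comm; apply Rmult_le_compat_r; [apply Rabs_pos | lra].
Qed.

Definition remainder (P : params) (S x : state) : state :=
  state_sub (vector_field P x) (jac P S (state_sub x S)).

Lemma vector_field_split P S x :
  vector_field P x = state_add (jac P S (state_sub x S)) (remainder P S x).
Proof.
  unfold remainder, state_add, state_sub; destruct (vector_field P x); f_equal; simpl; ring.
Qed.

Lemma remainder_coords P S x : steady_state P S ->
  ra (remainder P S x) =
    m_a P * taylor_rem (hill_act (theta_aa P) (n_aa P))
              (hill_slope (theta_aa P) (n_aa P) (pa S)) (pa S) (pa x)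
    + m_a P * taylor_rem (hill_rep (theta_b P) (n_b P))
              (- hill_slope (theta_b P) (n_b P) (pb S)) (pb S) (pb x) /\
  rb (remainder P S x) =
    m_b P * taylor_rem (hill_rep (theta_a P) (n_a P))
              (- hill_slope (theta_a P) (n_a P) (pa S)) (pa S) (pa x) /\
  pa (remainder P S x) = 0 /\ pb (remainder P S x) = 0.
Proof.
  intros (E1 & E2 & E3 & E4).
  assert (HX : Xq P (pa S) = m_a P * hill_slope (theta_aa P) (n_aa P) (pa S))
    by (unfold Xq, hill_slope, Rdiv; ring).
  assert (HY : Yq P (pb S) = - (m_a P * hill_slope (theta_b P) (n_b P) (pb S)))
    by (unfold Yq, hill_slope, Rdiv; ring).
  assert (HZ : Zq P (pa S) = - (m_b P * hill_slope (theta_a P) (n_a P) (pa S)))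
    by (unfold Zq, hill_slope, Rdiv; rewrite (Rplus_comm (pa S ^ n_a P)); ring).
  unfold remainder, vector_field, jac, state_sub, taylor_rem; simpl; rewrite HX, HY, HZ.
  unfold f_ra, f_rb, f_pa, f_pb, hill_act, hill_rep in *.
  repeat split; lra.
Qed.

Lemma Rabs_scaled_le c t k y d : 0 < c -> 0 <= k -> Rabs t <= k / c * y -> y <= d ->
  Rabs (c * t) <= k * d.
Proof.
  intros Hc Hk Ht Hy; rewrite Rabs_mult, (Rabs_pos_eq c) by lra.
  apply (Rmult_le_compat_l c) in Ht; [| lra].
  replace (c * (k / c * y)) with (k * y) in Ht by (field; lra).
  pose proof (Rmult_le_compat_l k _ _ Hk Hy); lra.
Qed.

Lemma remainder_small P S :
  0 < m_a P -> 0 < m_b P -> 0 < theta_a P -> 0 < theta_b P -> 0 < theta_aa P ->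
  steady_state P S -> 0 < pa S -> 0 < pb S ->
  forall eta, 0 < eta -> exists r, 0 < r /\ forall x, dist4 x S < r ->
    norm_inf (remainder P S x) <= eta * dist4 x S.
Proof.
  intros Hma Hmb Hta Htb Htaa Hss Hpa Hpb eta Heta.
  destruct (taylor_rem_small _ _ _ (hill_act_derivable _ (n_aa P) _ Htaa Hpa) (eta / 2 / m_a P))
    as (r1 & Hr1 & T1); [apply Rdiv_lt_0_compat; lra |].
  destruct (taylor_rem_small _ _ _ (hill_rep_derivable _ (n_b P) _ Htb Hpb) (eta / 2 / m_a P))
    as (r2 & Hr2 & T2); [apply Rdiv_lt_0_compat; lra |].
  destruct (taylor_rem_small _ _ _ (hill_rep_derivable _ (n_a P) _ Hta Hpa) (eta / m_b P))
    as (r3 & Hr3 & T3); [apply Rdiv_lt_0_compat; lra |].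
  exists (Rmin r1 (Rmin r2 r3)); split; [repeat apply Rmin_glb_lt; assumption |].
  intros x Hx; rewrite dist4_norm_inf in *; set (d := norm_inf (state_sub x S)) in *.
  destruct (coords_le_norm_inf (state_sub x S)) as (_ & _ & Ha & Hb).
  simpl in Ha, Hb; fold d in Ha, Hb.
  pose proof (Rmin_l r1 (Rmin r2 r3)); pose proof (Rmin_r r1 (Rmin r2 r3));
  pose proof (Rmin_l r2 r3); pose proof (Rmin_r r2 r3).
  specialize (T1 (pa x) ltac:(lra)); specialize (T2 (pb x) ltac:(lra));
  specialize (T3 (pa x) ltac:(lra)).
  pose proof (norm_inf_ge0 (state_sub x S)) as Hd; fold d in Hd.
  destruct (remainder_coords P S x Hss) as (Era & Erb & Epa & Epb).
  apply norm_inf_le;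
    [rewrite Era | rewrite Erb | rewrite Epa, Rabs_R0; nra | rewrite Epb, Rabs_R0; nra].
  - replace (eta * d) with (eta / 2 * d + eta / 2 * d) by field.
    apply Rabs_add_le; eapply Rabs_scaled_le; eassumption || lra.
  - eapply Rabs_scaled_le; eassumption || lra.
Qed.

Lemma Zq_neg P p : 0 < m_b P -> 0 < theta_a P -> (0 < n_a P)%nat -> 0 < p -> Zq P p < 0.
Proof.
  intros Hmb Hta Hna Hp; unfold Zq; apply Ropp_lt_gt_0_contravar, Rdiv_lt_0_compat.
  - repeat apply Rmult_lt_0_compat; try apply pow_lt; try apply lt_0_INR; assumption.
  - apply pow_lt; pose proof (pow_lt _ (n_a P) Hp); pose proof (pow_lt _ (n_a P) Hta); lra.
Qed.

Lemma sos_polar_perturbed_le ws u a g m mu : 0 < m -> 0 <= mu ->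
  sos_polar ws u a <= - mu * sos ws u -> m * norm_inf u ^ 2 <= sos ws u ->
  norm_inf g <= mu * m / (2 * sos_bound ws + 1) * norm_inf u ->
  2 * sos_polar ws u (state_add a g) <= - mu * sos ws u.
Proof.
  intros Hm Hmu Ha Hlow Hg; rewrite sos_polar_add_r.
  set (M := sos_bound ws) in *; pose proof (sos_bound_ge0 ws) as HM; fold M in HM.
  pose proof (norm_inf_ge0 u); pose proof (norm_inf_ge0 g).
  pose proof (Rabs_sos_polar_le ws u g) as Hpg; fold M in Hpg.
  pose proof (Rle_abs (sos_polar ws u g)).
  assert (Hfrac : M * (mu * m / (2 * M + 1)) <= mu * m / 2).
  { apply (Rmult_le_reg_r (2 * (2 * M + 1))); [lra |].
    replace (M * (mu * m / (2 * M + 1)) * (2 * (2 * M + 1))) with (2 * M * (mu * m))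
      by (field; lra).
    nra. }
  assert (M * norm_inf u * norm_inf g <= mu * m / 2 * norm_inf u ^ 2).
  { apply (Rmult_le_compat_l (M * norm_inf u)) in Hg; [| nra]. nra. }
  nra.
Qed.

Theorem theorem3 (P : params) (S : state) :
  0 < m_a P -> 0 < m_b P -> 0 < gamma_a P -> 0 < gamma_b P ->
  0 < k_a P -> 0 < k_b P -> 0 < delta_a P -> 0 < delta_b P ->
  0 < theta_a P -> 0 < theta_b P -> 0 < theta_aa P ->
  0 <= A_1 P -> 0 <= B_1 P ->
  (0 < n_a P)%nat -> (0 < n_b P)%nat -> (0 < n_aa P)%nat ->
  steady_state P S -> 0 < pa S -> 0 < pb S ->
  0 < epsilon1 P -> 0 < epsilon3 P S -> 0 < epsilon4 P S ->
  0 < epsilon1 P * epsilon2 P S * epsilon3 P S - epsilon1 P ^ 2 * epsilon4 P S - epsilon3 P S ^ 2 ->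
  locally_asymptotically_stable P S.
Proof.
  intros Hma Hmb _ _ Hka Hkb _ _ Hta Htb Htaa _ _ Hna _ _ Hss Hpa Hpb He1 He3 He4 HD.
  destruct (hurwitz4_shift (epsilon1 P) (epsilon2 P S) (epsilon3 P S) (epsilon4 P S))
    as (mu & Hmu & Hh); [repeat split; assumption |].
  set (ws := schwarz_forms P S mu).
  destruct (schwarz_forms_lower P S mu Hh) as (m & Hm & Hlow);
    [apply Rgt_not_eq; assumption | apply Rgt_not_eq; assumption
    | apply Rlt_not_eq, Zq_neg; assumption |].
  destruct (remainder_small P S Hma Hmb Hta Htb Htaa Hss Hpa Hpb (mu * m / (2 * sos_bound ws + 1)))
    as (r & Hr & Hrem).
  { pose proof (sos_bound_ge0 ws); apply Rdiv_lt_0_compat; nra. }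
  apply (lyapunov_asymptotically_stable P S (fun x => sos ws (state_sub x S))
           (fun x => 2 * sos_polar ws (state_sub x S) (vector_field P x)) m (sos_bound ws) mu r);
    try assumption.
  - intros x; rewrite dist4_norm_inf; apply Hlow.
  - intros x; rewrite dist4_norm_inf; apply sos_le_bound.
  - intros x t Hx; apply sos_derivable_lim, Hx.
  - intros x Hx; rewrite vector_field_split with (S := S).
    apply (sos_polar_perturbed_le _ _ _ _ m);
      [assumption | lra | apply sos_polar_schwarz_jac, Hh | apply Hlow |].
    rewrite <- dist4_norm_inf; apply Hrem, Hx.
Qed.
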